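(* Let $\mathcal{H}$ be a complex Hilbert space and let $A\in\mathcal{B}(\mathcal{H})$ be invertible. For a unit vector $x$ put \[ \xi(x)=\frac{\left|\langle A^2x,x\rangle-\langle Ax,x\rangle^2\right|}{\|A^*x\|}. \] Then \[ \inf_{\|x\|=1}\xi^2(x)+\omega^2(A)\le \|A\|^2 . \]
   Context: $\mathcal{B}(\mathcal{H})$ denotes the algebra of bounded linear operators on $\mathcal{H}$; $\omega(A)=\sup_{\|x\|=1}|\langle Ax,x\rangle|$ is the numerical radius and $\|\cdot\|$ the operator norm. *)

From HB Require Import structures.
From mathcomp Require Import all_boot all_order all_algebra.
From mathcomp Require Import classical_sets reals.
From mathcomp Require Import complex.

Set Implicit Arguments.
Unset Strict Implicit.
Unset Printing Implicit Defensive.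

Import Order.TTheory GRing.Theory Num.Theory.
Local Open Scope ring_scope.
Local Open Scope classical_set_scope.

Section Hilbert.
Variables (R : realType) (V : lmodType R[i]) (ip : V -> V -> R[i]).

Definition is_inner_product : Prop :=
  [/\ (forall (a : R[i]) (x y z : V), ip (a *: x + y) z = a * ip x z + ip y z),
      (forall x y : V, ip y x = conjc (ip x y)),
      (forall x : V, 0 <= ip x x) &
      (forall x : V, ip x x = 0 -> x = 0)].

Definition hnorm (x : V) : R := Num.sqrt (complex.Re (ip x x)).

Definition hcomplete : Prop :=
  forall u : nat -> V,
    (forall e : R, 0 < e -> exists N : nat, forall m n : nat,
        (N <= m)%N -> (N <= n)%N -> hnorm (u m - u n) < e) ->
    exists l : V, forall e : R, 0 < e -> exists N : nat, forall n : nat,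
        (N <= n)%N -> hnorm (u n - l) < e.

Definition is_hilbert : Prop := is_inner_product /\ hcomplete.

Definition bounded_op (A : V -> V) : Prop :=
  [/\ (forall x y : V, A (x + y) = A x + A y),
      (forall (a : R[i]) (x : V), A (a *: x) = a *: A x) &
      exists M : R, forall x : V, hnorm (A x) <= M * hnorm x].

Definition invertible_op (A : V -> V) : Prop :=
  exists B : V -> V, [/\ bounded_op B, (forall x, A (B x) = x) & (forall x, B (A x) = x)].

Definition is_adjoint (A Astar : V -> V) : Prop :=
  forall x y : V, ip (A x) y = ip x (Astar y).

Definition unit_sphere : set V := [set x | hnorm x = 1].

Definition opnorm (A : V -> V) : R := sup [set hnorm (A x) | x in unit_sphere].

Definition numrad (A : V -> V) : R := sup [set Normc.normc (ip (A x) x) | x in unit_sphere].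

Definition xi (A Astar : V -> V) (x : V) : R :=
  Normc.normc (ip (A (A x)) x - (ip (A x) x) ^+ 2) / hnorm (Astar x).

End Hilbert.

From HB Require Import structures.
From mathcomp Require Import all_boot all_order all_algebra.
From mathcomp Require Import classical_sets reals.
From mathcomp Require Import complex ring lra.
Import Order.TTheory GRing.Theory Num.Theory Normc.
Local Open Scope ring_scope.
Local Open Scope classical_set_scope.

(* For a unit vector x write A x = a x + w with a = <A x, x>, so that w is
   orthogonal to x.  Then ||A x||^2 = |a|^2 + ||w||^2, and
   <A^2 x, x> - a^2 = <w, A^* x>, so Cauchy-Schwarz gives xi(x) <= ||w||.
   Hence xi(x)^2 + |<A x, x>|^2 <= ||A x||^2 <= ||A||^2 for every unit x,
   and the theorem follows by passing to the infimum and the suprema. *)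

Section ComplexNorm.
Variable R : rcfType.

Lemma normc_ge0 (z : R[i]) : 0 <= normc z.
Proof. by case: z => a b; rewrite sqrtr_ge0. Qed.

Lemma sqr_normc (z : R[i]) : (normc z ^+ 2)%:C%C = z * z^*.
Proof. by rewrite rmorphXn -normCK. Qed.

End ComplexNorm.

Section InnerProduct.
Variables (R : realType) (V : lmodType R[i]) (ip : V -> V -> R[i]).
Hypothesis ip_inner : is_inner_product ip.

Lemma ipDZl a x y z : ip (a *: x + y) z = a * ip x z + ip y z.
Proof. by case: ip_inner => H _ _ _; apply: H. Qed.

Lemma ipC x y : ip y x = (ip x y)^*.
Proof. by case: ip_inner => _ H _ _; apply: H. Qed.

Lemma ipxx_ge0 x : 0 <= ip x x.
Proof. by case: ip_inner => _ _ H _; apply: H. Qed.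

Lemma ipxx_eq0 x : ip x x = 0 -> x = 0.
Proof. by case: ip_inner => _ _ _ H; apply: H. Qed.

Lemma ip0l z : ip 0 z = 0.
Proof.
have := ipDZl 1 0 0 z; rewrite scaler0 addr0 mul1r => ip00.
by apply: (addrI (ip 0 z)); rewrite addr0 -ip00.
Qed.

Lemma ipZl a x z : ip (a *: x) z = a * ip x z.
Proof. by rewrite -[a *: x]addr0 ipDZl ip0l addr0. Qed.

Lemma ipBl x y z : ip (x - y) z = ip x z - ip y z.
Proof. by rewrite -scaleN1r addrC ipDZl mulN1r addrC. Qed.

Lemma ipZr a x z : ip z (a *: x) = a^* * ip z x.
Proof. by rewrite ipC ipZl rmorphM /= -ipC. Qed.

Lemma ipBr x y z : ip z (x - y) = ip z x - ip z y.
Proof. by rewrite ipC ipBl rmorphB /= -!ipC. Qed.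

Lemma ip0r z : ip z 0 = 0.
Proof. by rewrite ipC ip0l rmorph0. Qed.

Lemma hnorm_ge0 x : 0 <= hnorm ip x.
Proof. exact: sqrtr_ge0. Qed.

Lemma sqr_hnorm x : (hnorm ip x ^+ 2)%:C%C = ip x x.
Proof.
have xx_ge0 := ipxx_ge0 x.
rewrite sqr_sqrtr; first exact/RRe_real/ger0_real.
by move: xx_ge0; rewrite lecE => /andP[].
Qed.

Lemma cauchy_schwarz u v : ip u v * (ip u v)^* <= ip u u * ip v v.
Proof.
have [/ipxx_eq0 ->|vv_neq0] := eqVneq (ip v v) 0.
  by rewrite !ip0r mul0r mulr0.
set q := ip v v; set c := ip u v; set p := ip u u.
have q_gt0 : 0 < q by rewrite lt_def vv_neq0 ipxx_ge0.
have qJ : q^* = q by rewrite -ipC.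
have := ipxx_ge0 (q *: u - c *: v).
rewrite !ipBl !ipZl !ipBr !ipZr -/q -/c -/p qJ [ip v u]ipC -/c.
have -> : q * (q * p - c^* * c) - c * (q * c^* - c^* * q)
   = q * (q * p - c * c^*) by ring.
by rewrite pmulr_rge0 // subr_ge0 [q * p]mulrC.
Qed.

Lemma normc_ip_le u v : normc (ip u v) <= hnorm ip u * hnorm ip v.
Proof.
rewrite -ler_sqr ?nnegrE ?normc_ge0 ?mulr_ge0 ?hnorm_ge0 //.
by rewrite -lecR sqr_normc exprMn rmorphM /= !sqr_hnorm cauchy_schwarz.
Qed.

Lemma sqr_hnorm_proj x y : hnorm ip x = 1 ->
  hnorm ip y ^+ 2 = hnorm ip (y - ip y x *: x) ^+ 2 + normc (ip y x) ^+ 2.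
Proof.
move=> x_unit; have xx1 : ip x x = 1 by rewrite -sqr_hnorm x_unit expr1n.
apply: complexI; rewrite rmorphD /= !sqr_hnorm sqr_normc.
rewrite !ipBl !ipZl !ipBr !ipZr xx1 [ip x y]ipC; ring.
Qed.

Variables (A Astar : V -> V).
Hypothesis adjA : is_adjoint ip A Astar.

Lemma xi_le_hnorm_proj x :
  xi ip A Astar x <= hnorm ip (A x - ip (A x) x *: x).
Proof.
rewrite /xi; have -> : ip (A (A x)) x - ip (A x) x ^+ 2
        = ip (A x - ip (A x) x *: x) (Astar x).
  by rewrite ipBl ipZl -!adjA expr2.
have [->|Astar_neq0] := eqVneq (hnorm ip (Astar x)) 0.
  by rewrite invr0 mulr0 hnorm_ge0.
have Astar_gt0 : 0 < hnorm ip (Astar x) by rewrite lt_def Astar_neq0 hnorm_ge0.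
by rewrite ler_pdivrMr // normc_ip_le.
Qed.

Lemma sqr_xi_add_le x : hnorm ip x = 1 ->
  xi ip A Astar x ^+ 2 + normc (ip (A x) x) ^+ 2 <= hnorm ip (A x) ^+ 2.
Proof.
move=> x_unit; rewrite (sqr_hnorm_proj _ (A x) x_unit) lerD2r.
rewrite ler_sqr ?nnegrE ?hnorm_ge0 ?xi_le_hnorm_proj //.
by rewrite divr_ge0 ?normc_ge0 ?hnorm_ge0.
Qed.

End InnerProduct.

Section InfSup.
Variables (R : realType) (T : Type) (U : set T).

Lemma sqr_sup_le (g : T -> R) (c : R) : U !=set0 ->
  (forall x, U x -> 0 <= g x) -> (forall x, U x -> g x ^+ 2 <= c) ->
  sup (g @` U) ^+ 2 <= c.
Proof.
move=> [x0 Ux0] g_ge0 g_le.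
have c_ge0 : 0 <= c := le_trans (sqr_ge0 _) (g_le x0 Ux0).
have g_ub : ubound (g @` U) (Num.sqrt c).
  move=> _ [x Ux <-]; rewrite -(ger0_norm (g_ge0 x Ux)) -sqrtr_sqr.
  exact/ler_wsqrtr/g_le.
have sup_ge0 : 0 <= sup (g @` U).
  apply: le_trans (g_ge0 x0 Ux0) _.
  by apply: ub_le_sup; [exists (Num.sqrt c)|exists x0].
rewrite -[c]sqr_sqrtr // ler_sqr ?nnegrE ?sqrtr_ge0 //.
by apply: ge_sup => //; exists (g x0), x0.
Qed.

Lemma inf_add_sqr_sup_le (f g h : T -> R) :
  has_ubound (h @` U) ->
  (forall x, U x -> 0 <= f x) -> (forall x, U x -> 0 <= g x) ->
  (forall x, U x -> 0 <= h x) ->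
  (forall x, U x -> f x + g x ^+ 2 <= h x ^+ 2) ->
  inf (f @` U) + sup (g @` U) ^+ 2 <= sup (h @` U) ^+ 2.
Proof.
move=> h_ub f_ge0 g_ge0 h_ge0 fgh.
have [->|U_neq0] := eqVneq U set0.
  by rewrite !image_set0 inf0 sup0 expr0n add0r.
rewrite addrC -lerBrDr; apply: sqr_sup_le => // [|x Ux].
  exact/set0P.
have f_inf : inf (f @` U) <= f x.
  by apply: ge_inf; [exists 0 => _ [y Uy <-]; exact: f_ge0|exists x].
have h_sup : h x ^+ 2 <= sup (h @` U) ^+ 2.
  have hx_sup : h x <= sup (h @` U) by apply: ub_le_sup => //; exists x.
  by rewrite ler_sqr ?nnegrE ?h_ge0 ?(le_trans (h_ge0 x Ux)).
by have := fgh x Ux; lra.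
Qed.

End InfSup.

Theorem theorem3p5 (R : realType) (V : lmodType R[i]) (ip : V -> V -> R[i])
  (HH : is_hilbert ip) (A Astar : V -> V)
  (HA : bounded_op ip A) (HAinv : invertible_op ip A)
  (HAstar : is_adjoint ip A Astar) :
  inf [set (xi ip A Astar x) ^+ 2 | x in unit_sphere ip] + numrad ip A ^+ 2
    <= opnorm ip A ^+ 2.
Proof.
(* Invertibility only makes A^* x nonzero, so that xi is a genuine quotient;
   with the convention x / 0 = 0 the bound holds without it. *)
have [ip_inner _] := HH; have [_ _ [M AM]] := HA.
apply: inf_add_sqr_sup_le => [|x _|x _|x _|x x_unit].
- by exists M => _ [x x_unit <-]; rewrite -[M]mulr1 -x_unit AM.
- exact: sqr_ge0.
- exact: normc_ge0.
- exact: hnorm_ge0.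
- exact: sqr_xi_add_le.
Qed.
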